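(* Let $\alpha\in(1,2)$ and let $K\ge3$ be an integer. Then \[ \sigma_{\alpha,K}:=\left(\frac{\left(1-\frac1K\right)^{\frac{1-\alpha}{3-\alpha}}+\left(1+\frac1K\right)^{\frac{1-\alpha}{3-\alpha}}}{2}\right)^{3-\alpha} \] satisfies \[ 1+\frac{\alpha-1}{3-\alpha}\cdot\frac1{K^2}\ \le\ \sigma_{\alpha,K}\ \le\ 1+\frac{7(\alpha-1)}{6(3-\alpha)}\cdot\frac1{K^2}. \] *)

From Stdlib Require Import Reals.
Open Scope R_scope.

Definition sigma_aK (a : R) (K : nat) : R :=
  let e := (1 - a) / (3 - a) in
  Rpower ((Rpower (1 - 1 / INR K) e + Rpower (1 + 1 / INR K) e) / 2) (3 - a).

From Stdlib Require Import Reals Lra Psatz.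
From Coquelicot Require Import Coquelicot.
Open Scope R_scope.

(* With t = (a - 1) / (3 - a) in (0, 1) and x = 1 / K, sigma is M ^ (2 / (1 + t)) for
   M = ((1 - x) ^ (-t) + (1 + x) ^ (-t)) / 2.  Writing d = artanh x, one has
   (1 -+ x) ^ (-1) = cosh d * exp (+-d), hence M = (cosh d) ^ t * cosh (t d), where
   cosh d = (1 - x ^ 2) ^ (-1/2) and d >= x.
   Lower bound: (cosh d) ^ t >= 1 + t x^2 / 2 and cosh (t d) >= 1 + t^2 x^2 / 2 give
   M >= 1 + t (1 + t) x^2 / 2, and Bernoulli's inequality for the exponent 2 / (1 + t) >= 1
   turns this into 1 + t x^2.
   Upper bound: concavity of y |-> y ^ t and cosh (t d) - 1 <= t^2 (cosh d - 1) give
   M <= (1 + t e) (1 + t^2 e) with e = cosh d - 1 <= 9 x^2 / 16 when x <= 1/3; writing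
   2 / (1 + t) = 1 + s with s in [0, 1], M ^ (1 + s) <= M (1 + s (M - 1)), and a
   polynomial estimate in t and x^2 concludes. *)

Lemma Rdiv_le_of_le_mul a b c : 0 < b -> a <= c * b -> a / b <= c.
Proof.
  intros Hb Hab. apply (Rmult_le_reg_r b); [exact Hb |].
  unfold Rdiv. rewrite Rmult_assoc, Rinv_l by lra. lra.
Qed.

Lemma Rle_div_of_mul_le a b c : 0 < b -> c * b <= a -> c <= a / b.
Proof.
  intros Hb Hab. apply (Rmult_le_reg_r b); [exact Hb |].
  unfold Rdiv. rewrite Rmult_assoc, Rinv_l by lra. lra.
Qed.

Lemma is_derive_nonneg_le (f f' : R -> R) (a b : R) :
  a <= b -> (forall c, a <= c <= b -> is_derive f c (f' c)) ->
  (forall c, a <= c <= b -> 0 <= f' c) -> f a <= f b.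
Proof.
  intros Hab Hf Hpos.
  destruct (Req_dec a b) as [<- | Hne]; [lra |].
  destruct (MVT_cor2 f f' a b) as [c [Hfab Hc]]; [lra | |].
  - intros c Hc. apply is_derive_Reals, Hf, Hc.
  - assert (0 <= f' c) by (apply Hpos; lra). nra.
Qed.

Lemma cosh_ge_1 y : 1 <= cosh y.
Proof.
  unfold cosh. rewrite exp_Ropp.
  assert (Hy := exp_pos y).
  assert (exp y + / exp y - 2 = (exp y - 1) ^ 2 / exp y) by (field; lra).
  assert (0 <= (exp y - 1) ^ 2 / exp y) by (apply Rdiv_le_0_compat; [apply pow2_ge_0 | lra]).
  lra.
Qed.

Lemma sinh_ge_id y : 0 <= y -> y <= sinh y.
Proof.
  intros Hy.
  set (f z := sinh z - z).
  enough (H : f 0 <= f y) by (unfold f in H; rewrite sinh_0 in H; lra).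
  apply (is_derive_nonneg_le f (fun z => cosh z - 1)); [exact Hy | |].
  - intros c _. unfold f, sinh, cosh. auto_derive; [easy | field].
  - intros c _. pose proof (cosh_ge_1 c). lra.
Qed.

Lemma cosh_ge_quadratic y : 0 <= y -> 1 + y ^ 2 / 2 <= cosh y.
Proof.
  intros Hy.
  set (f z := cosh z - z ^ 2 / 2).
  enough (H : f 0 <= f y) by (unfold f in H; rewrite cosh_0 in H; lra).
  apply (is_derive_nonneg_le f (fun z => sinh z - z)); [exact Hy | |].
  - intros c _. unfold f, sinh, cosh. auto_derive; [easy | field].
  - intros c Hc. pose proof (sinh_ge_id c). lra.
Qed.

Lemma cosh_le_mono p q : 0 <= p <= q -> cosh p <= cosh q.
Proof.
  intros Hpq.
  apply (is_derive_nonneg_le cosh sinh); [lra | |].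
  - intros c _. apply is_derive_Reals, derivable_pt_lim_cosh.
  - intros c Hc. pose proof (sinh_ge_id c). lra.
Qed.

Lemma sinh_mul_le t z : 0 <= t <= 1 -> 0 <= z -> sinh (t * z) <= t * sinh z.
Proof.
  intros Ht Hz.
  set (f y := t * sinh y - sinh (t * y)).
  enough (H : f 0 <= f z) by (unfold f in H; rewrite Rmult_0_r, sinh_0 in H; lra).
  apply (is_derive_nonneg_le f (fun y => t * (cosh y - cosh (t * y)))); [exact Hz | |].
  - intros c _. unfold f, sinh, cosh. auto_derive; [easy | field].
  - intros c Hc. apply Rmult_le_pos; [lra |].
    enough (cosh (t * c) <= cosh c) by lra.
    apply cosh_le_mono. nra.
Qed.

Lemma cosh_double_sub1 z : cosh (2 * z) - 1 = 2 * sinh z ^ 2.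
Proof.
  unfold cosh, sinh.
  replace (2 * z) with (z + z) by ring. replace (- (z + z)) with (- z + - z) by ring.
  rewrite !exp_plus.
  assert (exp z * exp (- z) = 1) by (rewrite <- exp_plus, Rplus_opp_r; apply exp_0).
  field_simplify. nra.
Qed.

Lemma cosh_mul_sub1_le t y : 0 <= t <= 1 -> 0 <= y ->
  cosh (t * y) - 1 <= t ^ 2 * (cosh y - 1).
Proof.
  intros Ht Hy.
  replace (t * y) with (2 * (t * (y / 2))) by field.
  replace y with (2 * (y / 2)) at 2 by field.
  rewrite !cosh_double_sub1.
  assert (Hs := sinh_mul_le t (y / 2) Ht ltac:(lra)).
  assert (0 <= sinh (t * (y / 2))) by (pose proof (sinh_ge_id (t * (y / 2))); nra).
  assert (sinh (t * (y / 2)) ^ 2 <= (t * sinh (y / 2)) ^ 2) by (apply pow_incr; lra).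
  nra.
Qed.

Lemma exp_ge_tangent c y : exp c * (1 + (y - c)) <= exp y.
Proof.
  replace (exp y) with (exp c * exp (y - c)) by (rewrite <- exp_plus; f_equal; ring).
  apply Rmult_le_compat_l; [apply Rlt_le, exp_pos | apply exp_ineq1_le].
Qed.

Lemma bernoulli_Rpower_le w s : 0 < w -> 0 <= s <= 1 -> Rpower w s <= 1 + s * (w - 1).
Proof.
  intros Hw Hs. unfold Rpower.
  set (c := s * ln w).
  assert (H1 := exp_ge_tangent c (ln w)).
  assert (H0 := exp_ge_tangent c 0).
  rewrite exp_ln in H1 by lra. rewrite exp_0 in H0.
  assert (Hc := exp_pos c).
  (* [exp c] is the [s], [1 - s] average of the tangent lines of [exp] at [c],
     taken at [ln w] and [0]. *)
  enough (exp c = s * (exp c * (1 + (ln w - c))) + (1 - s) * (exp c * (1 + (0 - c)))) by nra.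
  unfold c. ring.
Qed.

Lemma bernoulli_Rpower_ge v r : 0 < v -> 1 <= r -> 1 + r * (v - 1) <= Rpower v r.
Proof.
  intros Hv Hr.
  assert (Hw : 0 < Rpower v r) by apply exp_pos.
  assert (H := bernoulli_Rpower_le (Rpower v r) (/ r) Hw).
  rewrite Rpower_mult, Rinv_r, Rpower_1 in H by lra.
  assert (Hr1 : 0 <= / r <= 1).
  { split; [apply Rlt_le, Rinv_0_lt_compat; lra |].
    rewrite <- Rinv_1. apply Rinv_le_contravar; lra. }
  specialize (H Hr1).
  apply (Rmult_le_compat_l r) in H; [| lra].
  replace (r * (1 + / r * (Rpower v r - 1))) with (r + (Rpower v r - 1)) in H by (field; lra).
  nra.
Qed.

Definition artanh x := (ln (1 + x) - ln (1 - x)) / 2.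

Lemma artanh_ge_id x : 0 <= x < 1 -> x <= artanh x.
Proof.
  intros Hx. unfold artanh.
  set (f y := (ln (1 + y) - ln (1 - y)) / 2 - y).
  enough (H : f 0 <= f x) by (unfold f in H; rewrite Rplus_0_r, !Rminus_0_r, ln_1 in H; lra).
  apply (is_derive_nonneg_le f (fun y => y ^ 2 / (1 - y ^ 2))); [lra | |].
  - intros c Hc. unfold f. auto_derive; [lra |]. field. split; nra.
  - intros c Hc. apply Rdiv_le_0_compat; [apply pow2_ge_0 | nra].
Qed.

Lemma exp_add_exp_cosh u v : exp u + exp v = 2 * exp ((u + v) / 2) * cosh ((u - v) / 2).
Proof.
  set (p := (u + v) / 2). set (q := (u - v) / 2).
  replace u with (p + q) by (unfold p, q; field).
  replace v with (p + - q) by (unfold p, q; field).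
  rewrite !exp_plus. unfold cosh. field.
Qed.

Lemma cosh_artanh x : -1 < x < 1 -> cosh (artanh x) = exp (- ln (1 - x ^ 2) / 2).
Proof.
  intros Hx.
  set (m := - ln (1 - x ^ 2) / 2).
  assert (Hm : - ln (1 - x) + - ln (1 + x) = 2 * m).
  { unfold m. replace (1 - x ^ 2) with ((1 - x) * (1 + x)) by ring.
    rewrite ln_mult by lra. field. }
  assert (H := exp_add_exp_cosh (- ln (1 - x)) (- ln (1 + x))).
  rewrite Hm in H.
  replace ((2 * m) / 2) with m in H by field.
  replace ((- ln (1 - x) - - ln (1 + x)) / 2) with (artanh x) in H by (unfold artanh; field).
  rewrite !exp_Ropp, !exp_ln in H by lra.
  assert (Hsum : / (1 - x) + / (1 + x) = 2 * (exp m * exp m)).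
  { rewrite <- exp_plus. replace (m + m) with (- ln (1 - x ^ 2)) by (unfold m; field).
    rewrite exp_Ropp, exp_ln by nra. field. repeat split; intro; nra. }
  assert (Hem := exp_pos m).
  apply (Rmult_eq_reg_l (2 * exp m)); nra.
Qed.

Lemma ln_cosh_artanh x : -1 < x < 1 -> ln (cosh (artanh x)) = - ln (1 - x ^ 2) / 2.
Proof. intros Hx. rewrite cosh_artanh by exact Hx. apply ln_exp. Qed.

Lemma ln_cosh_artanh_ge x : -1 < x < 1 -> x ^ 2 / 2 <= ln (cosh (artanh x)).
Proof.
  intros Hx. rewrite ln_cosh_artanh by exact Hx.
  assert (H := exp_ineq1_le (ln (1 - x ^ 2))).
  rewrite exp_ln in H by nra. lra.
Qed.

Lemma cosh_artanh_sq x : -1 < x < 1 -> cosh (artanh x) ^ 2 * (1 - x ^ 2) = 1.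
Proof.
  intros Hx. rewrite cosh_artanh by exact Hx.
  set (m := - ln (1 - x ^ 2) / 2).
  replace (exp m ^ 2) with (exp (m + m)) by (rewrite exp_plus; ring).
  replace (m + m) with (- ln (1 - x ^ 2)) by (unfold m; field).
  rewrite exp_Ropp, exp_ln by nra. field. nra.
Qed.

Lemma cosh_artanh_sub1_le x : x ^ 2 <= 1 / 9 -> cosh (artanh x) - 1 <= 9 * x ^ 2 / 16.
Proof.
  intros Hx.
  assert (Hx1 : -1 < x < 1) by nra.
  assert (Hsq := cosh_artanh_sq x Hx1).
  assert (H1 := cosh_ge_1 (artanh x)).
  set (C := cosh (artanh x)) in *.
  assert (HC : C ^ 2 <= 9 / 8) by nra.
  assert ((C - 1) * (C + 1) = x ^ 2 * C ^ 2) by nra.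
  nra.
Qed.

Definition mean_pow t x := (Rpower (1 - x) (- t) + Rpower (1 + x) (- t)) / 2.

Lemma mean_pow_cosh t x : -1 < x < 1 ->
  mean_pow t x = Rpower (cosh (artanh x)) t * cosh (t * artanh x).
Proof.
  intros Hx. unfold mean_pow, Rpower at 1 2.
  rewrite exp_add_exp_cosh.
  unfold Rpower. rewrite ln_cosh_artanh by exact Hx.
  replace (1 - x ^ 2) with ((1 - x) * (1 + x)) by ring.
  rewrite ln_mult by lra. unfold artanh.
  replace ((- t * ln (1 - x) + - t * ln (1 + x)) / 2)
    with (t * (- (ln (1 - x) + ln (1 + x)) / 2)) by field.
  replace ((- t * ln (1 - x) - - t * ln (1 + x)) / 2)
    with (t * ((ln (1 + x) - ln (1 - x)) / 2)) by field.
  field.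
Qed.

Lemma mean_pow_ge t x : 0 <= t -> 0 <= x < 1 -> 1 + t * (1 + t) * x ^ 2 / 2 <= mean_pow t x.
Proof.
  intros Ht Hx. rewrite mean_pow_cosh by lra.
  assert (Hd := artanh_ge_id x Hx).
  assert (Hpow : 1 + t * (x ^ 2 / 2) <= Rpower (cosh (artanh x)) t).
  { assert (H := exp_ineq1_le (t * ln (cosh (artanh x)))).
    assert (t * (x ^ 2 / 2) <= t * ln (cosh (artanh x)))
      by (apply Rmult_le_compat_l; [lra | apply ln_cosh_artanh_ge; lra]).
    unfold Rpower. lra. }
  assert (Hcosh : 1 + t ^ 2 * x ^ 2 / 2 <= cosh (t * artanh x)).
  { assert (H := cosh_ge_quadratic (t * artanh x) ltac:(nra)).
    assert (t * x <= t * artanh x) by (apply Rmult_le_compat_l; lra).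
    assert ((t * x) ^ 2 <= (t * artanh x) ^ 2) by (apply pow_incr; nra).
    nra. }
  assert (0 <= t * (x ^ 2 / 2) * (t ^ 2 * x ^ 2 / 2)) by (apply Rmult_le_pos; nra).
  assert ((1 + t * (x ^ 2 / 2)) * (1 + t ^ 2 * x ^ 2 / 2) <=
          Rpower (cosh (artanh x)) t * cosh (t * artanh x))
    by (apply Rmult_le_compat; nra).
  nra.
Qed.

Lemma mean_pow_le t x : 0 <= t <= 1 -> 0 <= x < 1 ->
  mean_pow t x <= (1 + t * (cosh (artanh x) - 1)) * (1 + t ^ 2 * (cosh (artanh x) - 1)).
Proof.
  intros Ht Hx. rewrite mean_pow_cosh by lra.
  assert (Hd : 0 <= artanh x) by (pose proof (artanh_ge_id x Hx); lra).
  assert (HC := cosh_ge_1 (artanh x)).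
  apply Rmult_le_compat.
  - apply Rlt_le, exp_pos.
  - pose proof (cosh_ge_1 (t * artanh x)). lra.
  - apply bernoulli_Rpower_le; lra.
  - pose proof (cosh_mul_sub1_le t (artanh x) Ht Hd). lra.
Qed.

Lemma Rpower_1_plus_le M s : 1 <= M -> 0 <= s <= 1 -> Rpower M (1 + s) <= M * (1 + s * (M - 1)).
Proof.
  intros HM Hs. rewrite Rpower_plus, Rpower_1 by lra.
  apply Rmult_le_compat_l; [lra |]. apply bernoulli_Rpower_le; lra.
Qed.

Lemma Rpower_mean_pow_ge t x : 0 <= t <= 1 -> 0 <= x < 1 ->
  1 + t * x ^ 2 <= Rpower (mean_pow t x) (2 / (1 + t)).
Proof.
  intros Ht Hx.
  assert (HM := mean_pow_ge t x (proj1 Ht) Hx).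
  assert (Hr : 1 <= 2 / (1 + t))
    by (apply Rle_div_of_mul_le; lra).
  assert (H := bernoulli_Rpower_ge (mean_pow t x) (2 / (1 + t)) ltac:(nra) Hr).
  assert (2 / (1 + t) * (t * (1 + t) * x ^ 2 / 2) <= 2 / (1 + t) * (mean_pow t x - 1))
    by (apply Rmult_le_compat_l; [apply Rlt_le, Rdiv_lt_0_compat |]; lra).
  replace (2 / (1 + t) * (t * (1 + t) * x ^ 2 / 2)) with (t * x ^ 2) in * by (field; lra).
  lra.
Qed.

Lemma quartic_bound t X q : 0 <= t <= 1 -> 0 <= X <= 1 / 9 ->
  0 <= q <= 9 / 16 * (1 + t) + 81 / 256 * t ^ 2 * X ->
  2 * q + (1 - t) * t * X * q ^ 2 <= 7 * (1 + t) / 6.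
Proof.
  intros Ht HX Hq.
  assert (Ht2 : t ^ 2 * X <= t ^ 2 / 9) by nra.
  assert (Hq1 : q <= 6 / 5) by nra.
  assert (HXq : X * q ^ 2 <= 4 / 25) by nra.
  assert ((1 - t) * t * (X * q ^ 2) <= (1 - t) * t * (4 / 25)) by (apply Rmult_le_compat_l; nra).
  (* what remains is a quadratic in [t] with negative discriminant *)
  pose proof (pow2_ge_0 (t - 2 / 3)).
  nra.
Qed.

Lemma product_bound t X e : 0 <= t <= 1 -> 0 <= X <= 1 / 9 -> 0 <= e <= 9 * X / 16 ->
  let P := (1 + t * e) * (1 + t ^ 2 * e) in
  P * (1 + (1 - t) / (1 + t) * (P - 1)) <= 1 + 7 * t / 6 * X.
Proof.
  intros Ht HX He P.
  set (q := 9 / 16 * (1 + t) + 81 / 256 * t ^ 2 * X).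
  assert (Hq := quartic_bound t X q Ht HX).
  assert (HP : 0 <= P - 1 <= t * X * q).
  { replace (P - 1) with (t * (1 + t) * e + t ^ 3 * e ^ 2) by (unfold P; ring).
    assert (0 <= t * (1 + t)) by nra.
    assert (0 <= t ^ 3) by (apply pow_le; lra).
    assert (e ^ 2 <= (9 * X / 16) ^ 2) by (apply pow_incr; lra).
    assert (t * (1 + t) * e <= t * (1 + t) * (9 * X / 16)) by (apply Rmult_le_compat_l; lra).
    assert (t ^ 3 * e ^ 2 <= t ^ 3 * (9 * X / 16) ^ 2) by (apply Rmult_le_compat_l; lra).
    assert (0 <= t ^ 3 * e ^ 2) by (apply Rmult_le_pos; [lra | apply pow2_ge_0]).
    split; [nra |]. unfold q. nra. }
  set (u := P - 1) in *.
  assert (Hu : 2 * u + (1 - t) * u ^ 2 <= t * X * (7 * (1 + t) / 6)).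
  { assert (u ^ 2 <= (t * X * q) ^ 2) by (apply pow_incr; lra).
    assert ((1 - t) * u ^ 2 <= (1 - t) * (t * X * q) ^ 2) by (apply Rmult_le_compat_l; lra).
    assert (t * X * (2 * q + (1 - t) * t * X * q ^ 2) <= t * X * (7 * (1 + t) / 6))
      by (apply Rmult_le_compat_l; [nra | apply Hq; unfold q; nra]).
    nra. }
  replace P with (1 + u) by (unfold u; ring).
  replace ((1 + u) * (1 + (1 - t) / (1 + t) * u)) with (1 + (2 * u + (1 - t) * u ^ 2) / (1 + t))
    by (field; lra).
  enough ((2 * u + (1 - t) * u ^ 2) / (1 + t) <= 7 * t / 6 * X) by lra.
  apply Rdiv_le_of_le_mul; lra.
Qed.

Lemma Rpower_mean_pow_le t x : 0 <= t <= 1 -> 0 <= x -> x ^ 2 <= 1 / 9 ->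
  Rpower (mean_pow t x) (2 / (1 + t)) <= 1 + 7 * t / 6 * x ^ 2.
Proof.
  intros Ht Hx Hx2.
  assert (Hx1 : 0 <= x < 1) by nra.
  set (s := (1 - t) / (1 + t)).
  assert (Hs : 0 <= s <= 1)
    by (unfold s; split; [apply Rdiv_le_0_compat | apply Rdiv_le_of_le_mul]; lra).
  replace (2 / (1 + t)) with (1 + s) by (unfold s; field; lra).
  assert (HM1 : 1 <= mean_pow t x).
  { pose proof (mean_pow_ge t x (proj1 Ht) Hx1).
    assert (0 <= t * (1 + t) * x ^ 2 / 2) by (apply Rmult_le_pos; nra). lra. }
  assert (HMP := mean_pow_le t x Ht Hx1).
  set (M := mean_pow t x) in *.
  set (e := cosh (artanh x) - 1) in *.
  set (P := (1 + t * e) * (1 + t ^ 2 * e)) in *.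
  assert (He : 0 <= e <= 9 * x ^ 2 / 16)
    by (pose proof (cosh_ge_1 (artanh x)); pose proof (cosh_artanh_sub1_le x Hx2); unfold e; lra).
  assert (HX : 0 <= x ^ 2 <= 1 / 9) by nra.
  assert (Hprod := product_bound t (x ^ 2) e Ht HX He). cbv zeta in Hprod. fold P s in Hprod.
  assert (HMs := Rpower_1_plus_le M s HM1 Hs).
  assert (M * (1 + s * (M - 1)) <= P * (1 + s * (P - 1))) by (apply Rmult_le_compat; nra).
  lra.
Qed.

Lemma sigma_aK_mean_pow a K : a < 3 ->
  sigma_aK a K = Rpower (mean_pow ((a - 1) / (3 - a)) (1 / INR K)) (2 / (1 + (a - 1) / (3 - a))).
Proof.
  intros Ha. unfold sigma_aK, mean_pow.
  replace ((1 - a) / (3 - a)) with (- ((a - 1) / (3 - a))) by (field; lra).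
  f_equal. field. lra.
Qed.

Theorem proposition2 (a : R) (K : nat) :
  1 < a < 2 -> (3 <= K)%nat ->
  1 + (a - 1) / (3 - a) * (1 / (INR K)^2) <= sigma_aK a K /\
  sigma_aK a K <= 1 + 7 * (a - 1) / (6 * (3 - a)) * (1 / (INR K)^2).
Proof.
  intros Ha HK.
  assert (HK3 : 3 <= INR K) by (replace 3 with (INR 3) by (simpl; ring); apply le_INR, HK).
  rewrite sigma_aK_mean_pow by lra.
  set (t := (a - 1) / (3 - a)). set (x := 1 / INR K).
  assert (Ht : 0 <= t <= 1)
    by (unfold t; split; [apply Rdiv_le_0_compat | apply Rdiv_le_of_le_mul]; lra).
  assert (Hx : 0 <= x <= 1 / 3)
    by (unfold x; split; [apply Rdiv_le_0_compat | apply Rdiv_le_of_le_mul]; lra).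
  replace (1 / INR K ^ 2) with (x ^ 2) by (unfold x; field; lra).
  replace (7 * (a - 1) / (6 * (3 - a))) with (7 * t / 6) by (unfold t; field; lra).
  split.
  - apply Rpower_mean_pow_ge; lra.
  - apply Rpower_mean_pow_le; nra.
Qed.
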